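(* Let $K$ be the knot $6_2=K(11,3)$. For every $r\in(-4,0]\cap\mathbb{Q}$, the fundamental group $\pi_1(S^3_r(K))$ admits a non-abelian representation into $SL(2,\mathbb{R})$.
   Context: $S^3_r(K)$ denotes Dehn surgery on $K$ with slope $r$. *)

From HB Require Import structures.
From mathcomp Require Import all_boot all_order all_algebra.
From Stdlib Require Import Rdefinitions.
From mathcomp Require Import Rstruct.
Set Implicit Arguments. Unset Strict Implicit. Unset Printing Implicit Defensive.
Import Order.TTheory GRing.Theory Num.Theory.
Local Open Scope ring_scope.

(* Riley's presentation:
     pi_1(S^3 - K) = < a, b | w a = b w >,
   w = a^{e1} b^{e2} ... a^{e9} b^{e10},  e_i = (-1)^{floor(3 i / 11)},
   so (e_1..e_10) = (+,+,+,-,-,-,-,+,+,+) and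
     w = a b a b^-1 a^-1 b^-1 a^-1 b a b.
   The meridian is a, and the preferred longitude is
     lambda = w* w a^{-2 sigma},  sigma = sum e_i = 2,
   where w* is w written backwards.  Then
     pi_1(S^3_{m/n}(K)) = < a, b | w a = b w, a^m lambda^n = 1 >. *)



Definition in_SL2 (A : 'M[Rdefinitions.R]_2) : Prop := \det A = 1.

Definition word_w (A B : 'M[Rdefinitions.R]_2) : 'M[Rdefinitions.R]_2 :=
  A * B * A * B^-1 * A^-1 * B^-1 * A^-1 * B * A * B.

Definition word_wstar (A B : 'M[Rdefinitions.R]_2) : 'M[Rdefinitions.R]_2 :=
  B * A * B * A^-1 * B^-1 * A^-1 * B^-1 * A * B * A.

Definition longitude (A B : 'M[Rdefinitions.R]_2) : 'M[Rdefinitions.R]_2 :=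
  word_wstar A B * word_w A B * A ^- 4.

(* A homomorphism pi_1(S^3_r(K)) -> SL(2,R), r = m/n in lowest terms (n > 0),
   is determined by the images A, B of the generators a, b, which must
   lie in SL(2,R) and satisfy the defining relations. *)
Definition surgery_rep (r : rat) (A B : 'M[Rdefinitions.R]_2) : Prop :=
  [/\ in_SL2 A, in_SL2 B,
      word_w A B * A = B * word_w A B &
      A ^ (numq r) * longitude A B ^ (denq r) = 1].

(* A representation is non-abelian iff its image (generated by A, B)
   is non-abelian, i.e. iff A and B do not commute. *)
Definition nonabelian_rep (A B : 'M[Rdefinitions.R]_2) : Prop := A * B != B * A.

(* Send the meridian [a] to diag(s, 1/s) and [b] to a matrix of the same trace
   with off-diagonal parameter [u]; the relation of the knot group then holds exactly when the
   Riley polynomial vanishes at t = u (s - 1/s), and the longitude becomes diag(l, 1/l) with [l]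
   a polynomial in s and t, so the surgery relation a^m lambda^n = 1 for r = m/n reduces to
   l = s^(-r).  In the coordinates E = s^-2, v = s^4 t, the Riley curve over s >= 1.46 is the
   graph of a continuous function v(E) with values in [-6/5, 1/5], because there the Riley
   polynomial decreases in v.  Along this branch l < 1 <= s^(-r) at s = 1.46, while
   l > s^4 / 2 > s^(-r) for large s because -r < 4, and the intermediate value theorem gives the
   required point.  The polynomial sign conditions on boxes are certified by positive
   coefficients in the Bernstein basis. *)

From HB Require Import structures.
From mathcomp Require Import all_boot all_order all_algebra.
From Stdlib Require Import Rdefinitions.
From mathcomp Require Import Rstruct.
Import Order.TTheory GRing.Theory Num.Theory.
From Stdlib Require Import Reals Lra List.
Import ListNotations.
Local Open Scope R_scope.

Fixpoint peval (cs : list R) (x : R) : R :=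
  match cs with nil => 0 | c :: cs' => c + x * peval cs' x end.

Fixpoint peval2 (css : list (list R)) (x y : R) : R :=
  match css with nil => 0 | cs :: css' => peval cs y + x * peval2 css' x y end.

Fixpoint peval3 (csss : list (list (list R))) (x y z : R) : R :=
  match csss with nil => 0 | css :: csss' => peval2 css y z + x * peval3 csss' x y z end.

(* Bernstein form with the binomial coefficients absorbed into the coefficients:
   [bern f [c_0; ...; c_n] y = \sum_i f c_i * y^i * (1 - y)^(n - i)]. *)
Fixpoint bern {A : Type} (f : A -> R) (cs : list A) (y : R) : R :=
  match cs with nil => 0 | c :: cs' => f c * (1 - y) ^ length cs' + y * bern f cs' y end.

Fixpoint all_nonempty {A : Type} (P : A -> Prop) (cs : list A) : Prop :=
  match cs with
  | nil => False
  | c :: nil => P c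
  | c :: cs' => P c /\ all_nonempty P cs'
  end.

Lemma bern_pos {A : Type} (f : A -> R) (P : A -> Prop) cs y :
  (forall c, P c -> 0 < f c) -> all_nonempty P cs -> 0 <= y <= 1 -> 0 < bern f cs y.
Proof.
  intros Hf Hcs Hy; induction cs as [|c [|c' cs'] IH]; [contradiction | |].
  - specialize (Hf c Hcs); simpl; lra.
  - destruct Hcs as [Hc Hcs]; specialize (IH Hcs); specialize (Hf c Hc).
    change (0 < f c * (1 - y) ^ length (c' :: cs') + y * bern f (c' :: cs') y).
    assert (Hpow : 0 <= (1 - y) ^ length (c' :: cs')) by (apply pow_le; lra).
    destruct (Rle_lt_or_eq_dec 0 y (proj1 Hy)) as [Hy0 | <-].
    + assert (0 < y * bern f (c' :: cs') y) by (apply Rmult_lt_0_compat; lra).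
      assert (0 <= f c * (1 - y) ^ length (c' :: cs')) by (apply Rmult_le_pos; lra).
      lra.
    + rewrite Rminus_0_r pow1; lra.
Qed.

Definition bern1 (cs : list R) (y : R) : R := bern (fun c => c) cs y.
Definition bern2 (css : list (list R)) (x y : R) : R := bern (fun cs => bern1 cs y) css x.
Definition bern3 (csss : list (list (list R))) (x y z : R) : R :=
  bern (fun css => bern2 css y z) csss x.

Lemma bern1_pos cs y :
  all_nonempty (fun c => 0 < c) cs -> 0 <= y <= 1 -> 0 < bern1 cs y.
Proof. intros; eapply bern_pos; eauto. Qed.

Lemma bern2_pos css x y :
  all_nonempty (all_nonempty (fun c => 0 < c)) css ->
  0 <= x <= 1 -> 0 <= y <= 1 -> 0 < bern2 css x y.
Proof. intros; eapply bern_pos; eauto; intros; apply bern1_pos; auto. Qed.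

Lemma bern3_pos csss x y z :
  all_nonempty (all_nonempty (all_nonempty (fun c => 0 < c))) csss ->
  0 <= x <= 1 -> 0 <= y <= 1 -> 0 <= z <= 1 -> 0 < bern3 csss x y z.
Proof. intros; eapply bern_pos; eauto; intros; apply bern2_pos; auto. Qed.

Definition riley_coefs : list (list R) :=
  [[(-1); (-1); 0; 0; 0; 0];
   [3; 3; 0; 0; 0; 0];
   [(-3); (-6); 0; 0; 0; 0];
   [3; 11; 4; 0; 0; 0];
   [(-1); (-13); (-9); 0; 0; 0];
   [0; 11; 16; 0; 0; 0];
   [0; (-6); (-19); (-6); 0; 0];
   [0; 3; 16; 9; 0; 0];
   [0; (-1); (-9); (-14); 0; 0];
   [0; 0; 4; 9; 4; 0];
   [0; 0; 0; (-6); (-3); 0];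
   [0; 0; 0; 0; 4; 0];
   [0; 0; 0; 0; 0; (-1)]].

Definition long_coefs : list (list R) :=
  [[1; 0; 0; 0];
   [(-2); 0; 0; 0];
   [1; 0; 0; 0];
   [0; (-3); 0; 0];
   [(-2); 4; 0; 0];
   [1; (-1); 0; 0];
   [0; (-2); 3; 0];
   [0; 3; (-2); 0];
   [0; (-2); (-1); 0];
   [0; 1; 2; (-1)];
   [0; 0; (-2); 0];
   [0; 0; 0; 1]].

Definition riley_dq_coefs : list (list (list R)) :=
  [[[(-1); 0; 0; 0; 0];
    [0; 0; 0; 0; 0];
    [0; 0; 0; 0; 0];
    [0; 0; 0; 0; 0];
    [0; 0; 0; 0; 0]];
   [[3; 0; 0; 0; 0];
    [0; 0; 0; 0; 0];
    [0; 0; 0; 0; 0];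
    [0; 0; 0; 0; 0];
    [0; 0; 0; 0; 0]];
   [[(-6); 0; 0; 0; 0];
    [0; 0; 0; 0; 0];
    [0; 0; 0; 0; 0];
    [0; 0; 0; 0; 0];
    [0; 0; 0; 0; 0]];
   [[11; 4; 0; 0; 0];
    [4; 0; 0; 0; 0];
    [0; 0; 0; 0; 0];
    [0; 0; 0; 0; 0];
    [0; 0; 0; 0; 0]];
   [[(-13); (-9); 0; 0; 0];
    [(-9); 0; 0; 0; 0];
    [0; 0; 0; 0; 0];
    [0; 0; 0; 0; 0];
    [0; 0; 0; 0; 0]];
   [[11; 16; 0; 0; 0];
    [16; 0; 0; 0; 0];
    [0; 0; 0; 0; 0];
    [0; 0; 0; 0; 0];
    [0; 0; 0; 0; 0]];
   [[(-6); (-19); (-6); 0; 0];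
    [(-19); (-6); 0; 0; 0];
    [(-6); 0; 0; 0; 0];
    [0; 0; 0; 0; 0];
    [0; 0; 0; 0; 0]];
   [[3; 16; 9; 0; 0];
    [16; 9; 0; 0; 0];
    [9; 0; 0; 0; 0];
    [0; 0; 0; 0; 0];
    [0; 0; 0; 0; 0]];
   [[(-1); (-9); (-14); 0; 0];
    [(-9); (-14); 0; 0; 0];
    [(-14); 0; 0; 0; 0];
    [0; 0; 0; 0; 0];
    [0; 0; 0; 0; 0]];
   [[0; 4; 9; 4; 0];
    [4; 9; 4; 0; 0];
    [9; 4; 0; 0; 0];
    [4; 0; 0; 0; 0];
    [0; 0; 0; 0; 0]];
   [[0; 0; (-6); (-3); 0];
    [0; (-6); (-3); 0; 0];
    [(-6); (-3); 0; 0; 0];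
    [(-3); 0; 0; 0; 0];
    [0; 0; 0; 0; 0]];
   [[0; 0; 0; 4; 0];
    [0; 0; 4; 0; 0];
    [0; 4; 0; 0; 0];
    [4; 0; 0; 0; 0];
    [0; 0; 0; 0; 0]];
   [[0; 0; 0; 0; (-1)];
    [0; 0; 0; (-1); 0];
    [0; 0; (-1); 0; 0];
    [0; (-1); 0; 0; 0];
    [(-1); 0; 0; 0; 0]]].

(* [rileyEv E v] and [longEv E v] are [riley_poly s t] and [long_poly s t] divided by [s^4] at
   E = s^-2, t = s^-4 v (lemmas [riley_polyEv], [long_polyEv]); in these coordinates they are
   polynomials. *)
Definition rileyEv (E v : R) : R := peval2 riley_coefs E v.
Definition longEv (E v : R) : R := peval2 long_coefs E v.
Definition rileyEv_dq (E v1 v2 : R) : R := peval3 riley_dq_coefs E v1 v2.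

Lemma rileyEv_sub E v1 v2 : rileyEv E v1 - rileyEv E v2 = (v1 - v2) * rileyEv_dq E v1 v2.
Proof.
  unfold rileyEv, rileyEv_dq, riley_coefs, riley_dq_coefs; cbn [peval peval2 peval3]; ring.
Qed.

Definition Emax : R := 2500 / 5329.
Definition vlo : R := -6 / 5.
Definition vhi : R := 1 / 5.

(* Bernstein coefficients, all positive, of the polynomials on the left of the identities
   [*_bern] below, as polynomials on the unit box. *)
Definition cert_vlo : list R :=
  [1/5; 56448/26645; 1565891406/141991205; 5645338574216/151334226289;
   72666518397236519/806460091894081; 3455082209251617183008/21488129148517788245;
   24510747016150291858160404/114510240232451293557605;
   129410254408822418328571498928/610225070198732943368477045;
   100426167744055441284504195666539/650377879817809571042122834561;
   278887723127944435276099303052677536/3465863721549107204083472585375569;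
   2634870408611088867613451013413766912766/92347938860675961452804127037332036005;
   3056602640304188392403571104575995651107048/492122166188542198581993192981942419870645;
   1663981535604156214161495561910063862048415941/2622519023618741376243441725400771155490667205].

Definition cert_vhi : list R :=
  [6/5; 338688/26645; 8739098436/141991205; 27210218945296/151334226289;
   283989344477169114/806460091894081; 10433382627850953098048/21488129148517788245;
   55091910052320063336462424/114510240232451293557605;
   209219497250154499993053993568/610225070198732943368477045;
   112199572303955742816207611499234/650377879817809571042122834561;
   203179932423867717532005906566065216/3465863721549107204083472585375569;
   1132626431771606347588468101003070226596/92347938860675961452804127037332036005;
   624592952630438811358935280204014844142288/492122166188542198581993192981942419870645;
   66954467831398493252348955075819721634245646/2622519023618741376243441725400771155490667205].

Definition cert_dq : list (list (list R)) :=
  [[[1; 4; 6; 4; 1];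
    [4; 16; 24; 16; 4];
    [6; 24; 36; 24; 6];
    [4; 16; 24; 16; 4];
    [1; 4; 6; 4; 1]];
   [[56448/5329; 225792/5329; 338688/5329; 225792/5329; 56448/5329];
    [225792/5329; 903168/5329; 1354752/5329; 903168/5329; 225792/5329];
    [338688/5329; 1354752/5329; 2032128/5329; 1354752/5329; 338688/5329];
    [225792/5329; 903168/5329; 1354752/5329; 903168/5329; 225792/5329];
    [56448/5329; 225792/5329; 338688/5329; 225792/5329; 56448/5329]];
   [[1472141406/28398241; 5888565624/28398241; 8832848436/28398241; 5888565624/28398241;
     1472141406/28398241];
    [5888565624/28398241; 23554262496/28398241; 35331393744/28398241; 23554262496/28398241;
     5888565624/28398241];
    [8832848436/28398241; 35331393744/28398241; 52997090616/28398241; 35331393744/28398241;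
     8832848436/28398241];
    [5888565624/28398241; 23554262496/28398241; 35331393744/28398241; 23554262496/28398241;
     5888565624/28398241];
    [1472141406/28398241; 5888565624/28398241; 8832848436/28398241; 5888565624/28398241;
     1472141406/28398241]];
   [[23555755371080/151334226289; 94135521484320/151334226289; 141072032226480/151334226289;
     93960521484320/151334226289; 23468255371080/151334226289];
    [94135521484320/151334226289; 376192085937280/151334226289; 563763128905920/151334226289;
     375492085937280/151334226289; 93785521484320/151334226289];
    [141072032226480/151334226289; 563763128905920/151334226289; 844857193358880/151334226289;
     562713128905920/151334226289; 140547032226480/151334226289];
    [93960521484320/151334226289; 375492085937280/151334226289; 562713128905920/151334226289;
     374792085937280/151334226289; 93610521484320/151334226289];
    [23468255371080/151334226289; 93785521484320/151334226289; 140547032226480/151334226289;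
     93610521484320/151334226289; 23380755371080/151334226289]];
   [[258458587767432595/806460091894081; 1030129951069730380/806460091894081;
     1539638326604595570/806460091894081; 1022721151069730380/806460091894081;
     254754187767432595/806460091894081];
    [1030129951069730380/806460091894081; 4105702204278921520/806460091894081;
     6136326906418382280/806460091894081; 4076067004278921520/806460091894081;
     1015312351069730380/806460091894081];
    [1539638326604595570/806460091894081; 6136326906418382280/806460091894081;
     9171150759627573420/806460091894081; 6091874106418382280/806460091894081;
     1517411926604595570/806460091894081];
    [1022721151069730380/806460091894081; 4076067004278921520/806460091894081;
     6091874106418382280/806460091894081; 4046431804278921520/806460091894081;
     1007903551069730380/806460091894081];
    [254754187767432595/806460091894081; 1015312351069730380/806460091894081;
     1517411926604595570/806460091894081; 1007903551069730380/806460091894081;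
     251049787767432595/806460091894081]];
   [[2054725426950367183008/4297625829703557649; 8148242686151468732032/4297625829703557649;
     12116375496752203098048/4297625829703557649; 8006924642851468732032/4297625829703557649;
     1984066405300367183008/4297625829703557649];
    [8148242686151468732032/4297625829703557649; 32310334658005874928128/4297625829703557649;
     48041547857108812392192/4297625829703557649; 31745062484805874928128/4297625829703557649;
     7865606599551468732032/4297625829703557649];
    [12116375496752203098048/4297625829703557649; 48041547857108812392192/4297625829703557649;
     71426390590813218588288/4297625829703557649; 47193639597308812392192/4297625829703557649;
     11692421366852203098048/4297625829703557649];
    [8006924642851468732032/4297625829703557649; 31745062484805874928128/4297625829703557649;
     47193639597308812392192/4297625829703557649; 31179790311605874928128/4297625829703557649;
     7724288556251468732032/4297625829703557649];
    [1984066405300367183008/4297625829703557649; 7865606599551468732032/4297625829703557649;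
     11692421366852203098048/4297625829703557649; 7724288556251468732032/4297625829703557649;
     1913407383650367183008/4297625829703557649]];
   [[12172369347706522170660404/22902048046490258711521;
     47886045102008188682641616/22902048046490258711521;
     70626790313535433023962424/22902048046490258711521;
     46284922711872388682641616/22902048046490258711521;
     11371808152638622170660404/22902048046490258711521];
    [47886045102008188682641616/22902048046490258711521;
     188333322346511154730566464/22902048046490258711521;
     277695180802484332095849696/22902048046490258711521;
     181934574973467954730566464/22902048046490258711521;
     44686671415486588682641616/22902048046490258711521];
    [70626790313535433023962424/22902048046490258711521;
     277695180802484332095849696/22902048046490258711521;
     409342027088740398143774544/22902048046490258711521;
     268105673024169532095849696/22902048046490258711521;
     65832036424378033023962424/22902048046490258711521];
    [46284922711872388682641616/22902048046490258711521;
     181934574973467954730566464/22902048046490258711521;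
     268105673024169532095849696/22902048046490258711521;
     175547311975424754730566464/22902048046490258711521;
     43091291212850788682641616/22902048046490258711521];
    [11371808152638622170660404/22902048046490258711521;
     44686671415486588682641616/22902048046490258711521;
     65832036424378033023962424/22902048046490258711521;
     43091291212850788682641616/22902048046490258711521;
     10574118051320722170660404/22902048046490258711521]];
   [[54333662878060704570946498928/122045014039746588673695409;
     211295633692607387758785995712/122045014039746588673695409;
     307965957559457935850678993568/122045014039746588673695409;
     199379665553336526708785995712/122045014039746588673695409;
     48375678808425274045946498928/122045014039746588673695409];
    [211295633692607387758785995712/122045014039746588673695409;
     821107497241887828935143982848/122045014039746588673695409;
     1195872824570019160252715974272/122045014039746588673695409;
     773605692184804384735143982848/122045014039746588673695409;
     187544731164065665658785995712/122045014039746588673695409];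
    [307965957559457935850678993568/122045014039746588673695409;
     1195872824570019160252715974272/122045014039746588673695409;
     1740308930853309865654073961408/122045014039746588673695409;
     1124863218234393993952715974272/122045014039746588673695409;
     272461154391645352700678993568/122045014039746588673695409];
    [199379665553336526708785995712/122045014039746588673695409;
     773605692184804384735143982848/122045014039746588673695409;
     1124863218234393993952715974272/122045014039746588673695409;
     726428022127720940535143982848/122045014039746588673695409;
     175790830524794804608785995712/122045014039746588673695409];
    [48375678808425274045946498928/122045014039746588673695409;
     187544731164065665658785995712/122045014039746588673695409;
     272461154391645352700678993568/122045014039746588673695409;
     175790830524794804608785995712/122045014039746588673695409;
     42498728488789843520946498928/122045014039746588673695409]];
   [[182173901948110659859751290832695/650377879817809571042122834561;
     697419230247808160186905163330780/650377879817809571042122834561;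
     1000192283257006615152207744996170/650377879817809571042122834561;
     636822483563031389182705163330780/650377879817809571042122834561;
     151875528605722274357651290832695/650377879817809571042122834561];
    [697419230247808160186905163330780/650377879817809571042122834561;
     2665549415014940817489220653323120/650377879817809571042122834561;
     3816044880366957866346230979984680/650377879817809571042122834561;
     2425118436680325920972420653323120/650377879817809571042122834561;
     577203741080500711928505163330780/650377879817809571042122834561];
    [1000192283257006615152207744996170/650377879817809571042122834561;
     3816044880366957866346230979984680/650377879817809571042122834561;
     5452848966772310470625446469977020/650377879817809571042122834561;
     3458332425471773802821030979984680/650377879817809571042122834561;
     821336055809414583389607744996170/650377879817809571042122834561];
    [636822483563031389182705163330780/650377879817809571042122834561;
     2425118436680325920972420653323120/650377879817809571042122834561;
     3458332425471773802821030979984680/650377879817809571042122834561;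
     2188599475154695399455620653323120/650377879817809571042122834561;
     518563002800216128424305163330780/650377879817809571042122834561];
    [151875528605722274357651290832695/650377879817809571042122834561;
     577203741080500711928505163330780/650377879817809571042122834561;
     821336055809414583389607744996170/650377879817809571042122834561;
     518563002800216128424305163330780/650377879817809571042122834561;
     122555159465579982605551290832695/650377879817809571042122834561]];
   [[450024292222310767263477714013387680/3465863721549107204083472585375569;
     1687847650052322343974794006053550720/3465863721549107204083472585375569;
     2369998333234765709593515734080326080/3465863721549107204083472585375569;
     1476509015084619956316560306053550720/3465863721549107204083472585375569;
     344334039679865823434360864013387680/3465863721549107204083472585375569];
    [1687847650052322343974794006053550720/3465863721549107204083472585375569;
     6308993661273269756832708624214202880/3465863721549107204083472585375569;
     8826257759035340831649361836321304320/3465863721549107204083472585375569;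
     5476757653991411768699773824214202880/3465863721549107204083472585375569;
     1271645906177018349908326606053550720/3465863721549107204083472585375569];
    [2369998333234765709593515734080326080/3465863721549107204083472585375569;
     8826257759035340831649361836321304320/3465863721549107204083472585375569;
     12298264485815845424886991104481956480/3465863721549107204083472585375569;
     7597497806761606193199959636321304320/3465863721549107204083472585375569;
     1755492746746335890368814634080326080/3465863721549107204083472585375569];
    [1476509015084619956316560306053550720/3465863721549107204083472585375569;
     5476757653991411768699773824214202880/3465863721549107204083472585375569;
     7597497806761606193199959636321304320/3465863721549107204083472585375569;
     4670591231418706905566839024214202880/3465863721549107204083472585375569;
     1073342063563892524750092906053550720/3465863721549107204083472585375569];
    [344334039679865823434360864013387680/3465863721549107204083472585375569;
     1271645906177018349908326606053550720/3465863721549107204083472585375569;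
     1755492746746335890368814634080326080/3465863721549107204083472585375569;
     1073342063563892524750092906053550720/3465863721549107204083472585375569;
     245161183314709160855244014013387680/3465863721549107204083472585375569]];
   [[783495803284606125321107434159548162766/18469587772135192290560825407466407201;
     2862657893966989810905672354538192651064/18469587772135192290560825407466407201;
     3913633083514296276591153708657288976596/18469587772135192290560825407466407201;
     2372684827172297621749720090338192651064/18469587772135192290560825407466407201;
     538213834340385030743131302059548162766/18469587772135192290560825407466407201];
    [2862657893966989810905672354538192651064/18469587772135192290560825407466407201;
     10391964520503184077908441139752770604256/18469587772135192290560825407466407201;
     14105892211897717751494414292029155906384/18469587772135192290560825407466407201;
     8484158953778842512886194582952770604256/18469587772135192290560825407466407201;
     1907573368417319028394549076138192651064/18469587772135192290560825407466407201];
    [3913633083514296276591153708657288976596/18469587772135192290560825407466407201;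
     14105892211897717751494414292029155906384/18469587772135192290560825407466407201;
     18993910849251907169741008124143733859576/18469587772135192290560825407466407201;
     11321132170305346191363388206829155906384/18469587772135192290560825407466407201;
     2519480449436860496525640666057288976596/18469587772135192290560825407466407201];
    [2372684827172297621749720090338192651064/18469587772135192290560825407466407201;
     8484158953778842512886194582952770604256/18469587772135192290560825407466407201;
     11321132170305346191363388206829155906384/18469587772135192290560825407466407201;
     6678163303588355331067073026152770604256/18469587772135192290560825407466407201;
     1468505259889554030840159311938192651064/18469587772135192290560825407466407201];
    [538213834340385030743131302059548162766/18469587772135192290560825407466407201;
     1907573368417319028394549076138192651064/18469587772135192290560825407466407201;
     2519480449436860496525640666057288976596/18469587772135192290560825407466407201;
     1468505259889554030840159311938192651064/18469587772135192290560825407466407201;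
     318384344529627531965936419959548162766/18469587772135192290560825407466407201]];
   [[872784684864658872655246547283574713607048/98424433237708439716398638596388483974129;
     3085545529437322490458664661105011354428192/98424433237708439716398638596388483974129;
     4081614168299457879783733449613585781642288/98424433237708439716398638596388483974129;
     2394738408431741005374959105046436354428192/98424433237708439716398638596388483974129;
     525885084704946743394643769254287213607048/98424433237708439716398638596388483974129];
    [3085545529437322490458664661105011354428192/98424433237708439716398638596388483974129;
     10781494966839481605524591282302895417712768/98424433237708439716398638596388483974129;
     14074962401282441677741160880278618126569152/98424433237708439716398638596388483974129;
     8135653702540357406993206558068595417712768/98424433237708439716398638596388483974129;
     1756640738660074844317972298987861354428192/98424433237708439716398638596388483974129];
    [4081614168299457879783733449613585781642288/98424433237708439716398638596388483974129;
     14074962401282441677741160880278618126569152/98424433237708439716398638596388483974129;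
     18096340091161711300243894443154339689853728/98424433237708439716398638596388483974129;
     10276297175790872445774240043927168126569152/98424433237708439716398638596388483974129;
     2173305317612144943487773031437860781642288/98424433237708439716398638596388483974129];
    [2394738408431741005374959105046436354428192/98424433237708439716398638596388483974129;
     8135653702540357406993206558068595417712768/98424433237708439716398638596388483974129;
     10276297175790872445774240043927168126569152/98424433237708439716398638596388483974129;
     5712618560432265598318696833834295417712768/98424433237708439716398638596388483974129;
     1177236678750009554162704242929286354428192/98424433237708439716398638596388483974129];
    [525885084704946743394643769254287213607048/98424433237708439716398638596388483974129;
     1756640738660074844317972298987861354428192/98424433237708439716398638596388483974129;
     2173305317612144943487773031437860781642288/98424433237708439716398638596388483974129;
     1177236678750009554162704242929286354428192/98424433237708439716398638596388483974129;
     234687015092992711598259741224999713607048/98424433237708439716398638596388483974129]];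
   [[479243570708953695877675367428835611954665941/524503804723748275248688345080154231098133441;
     1624465504516554703885153558396097347818663764/524503804723748275248688345080154231098133441;
     2064730695226248288104883802646528371727995646/524503804723748275248688345080154231098133441;
     1166556356134643097674383399820107147818663764/524503804723748275248688345080154231098133441;
     247276571919364958201977788140840511954665941/524503804723748275248688345080154231098133441];
    [1624465504516554703885153558396097347818663764/524503804723748275248688345080154231098133441;
     5394622510719484848753897920338658991274655056/524503804723748275248688345080154231098133441;
     6697774125176347579422048738764392886911982584/524503804723748275248688345080154231098133441;
     3683840499047811967185517950097198191274655056/524503804723748275248688345080154231098133441;
     757139288887871095132213573275366947818663764/524503804723748275248688345080154231098133441];
    [2064730695226248288104883802646528371727995646/524503804723748275248688345080154231098133441;
     6697774125176347579422048738764392886911982584/524503804723748275248688345080154231098133441;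
     8086492406144747809382820392601508430367973876/524503804723748275248688345080154231098133441;
     4300375327651528552450279779495951686911982584/524503804723748275248688345080154231098133441;
     848300214677094878134624323012307771727995646/524503804723748275248688345080154231098133441];
    [1166556356134643097674383399820107147818663764/524503804723748275248688345080154231098133441;
     3683840499047811967185517950097198191274655056/524503804723748275248688345080154231098133441;
     4300375327651528552450279779495951686911982584/524503804723748275248688345080154231098133441;
     2190210299892284414354039307980737391274655056/524503804723748275248688345080154231098133441;
     408035023967401293914894078761876747818663764/524503804723748275248688345080154231098133441];
    [247276571919364958201977788140840511954665941/524503804723748275248688345080154231098133441;
     757139288887871095132213573275366947818663764/524503804723748275248688345080154231098133441;
     848300214677094878134624323012307771727995646/524503804723748275248688345080154231098133441;
     408035023967401293914894078761876747818663764/524503804723748275248688345080154231098133441;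
     69826503462181693335505540884095411954665941/524503804723748275248688345080154231098133441]]].

Definition cert_long_Emax : list R :=
  [53346504766847351/4297625829703557649;
   232091158936427221567559137288293/3465863721549107204083472585375569;
   1770470176318031987443292101984313397/18469587772135192290560825407466407201;
   4066275030110537021415331061827927030871/98424433237708439716398638596388483974129].

Definition cert_long_half : list (list R) :=
  [[1/2; 3/2; 3/2; 1/2];
   [5; 15; 15; 5];
   [361/16; 1083/16; 1083/16; 361/16];
   [9699/160; 58173/320; 7269/40; 19377/320];
   [68911/640; 206411/640; 206089/640; 68589/640];
   [679123/5120; 1014369/2560; 2020107/5120; 167623/1280];
   [739083/6400; 17572771/51200; 34815247/102400; 11495033/102400];
   [14524999/204800; 85567427/409600; 41993851/204800; 27470273/409600];
   [6149759/204800; 71367779/819200; 137898803/1638400; 44361317/1638400];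
   [136208453/16384000; 770520377/32768000; 181052957/8192000; 113054007/16384000];
   [22055181/16384000; 59723527/16384000; 213533087/65536000; 62858331/65536000];
   [1253121/13107200; 6270339/26214400; 10106967/52428800; 5156517/104857600]].

Lemma rileyEv_vlo_bern x : rileyEv (Emax * x) vlo = bern1 cert_vlo x.
Proof.
  unfold rileyEv, riley_coefs, bern1, cert_vlo, Emax, vlo; cbn [peval peval2 bern length]; field.
Qed.

Lemma rileyEv_vhi_bern x : - rileyEv (Emax * x) vhi = bern1 cert_vhi x.
Proof.
  unfold rileyEv, riley_coefs, bern1, cert_vhi, Emax, vhi; cbn [peval peval2 bern length]; field.
Qed.

Lemma rileyEv_dq_bern x y z :
  - rileyEv_dq (Emax * x) (vlo + 7/5 * y) (vlo + 7/5 * z) = bern3 cert_dq x y z.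
Proof.
  unfold rileyEv_dq, riley_dq_coefs, bern3, bern2, bern1, cert_dq, Emax, vlo.
  cbn [peval peval2 peval3 bern length]; field.
Qed.

Lemma longEv_Emax_bern y : Emax ^ 2 - longEv Emax (1/5 * y) = bern1 cert_long_Emax y.
Proof.
  unfold longEv, long_coefs, bern1, cert_long_Emax, Emax; cbn [peval peval2 bern length]; field.
Qed.

Lemma longEv_half_bern x y : longEv (1/4 * x) (vlo + 7/5 * y) - 1/2 = bern2 cert_long_half x y.
Proof.
  unfold longEv, long_coefs, bern2, bern1, cert_long_half, vlo.
  cbn [peval peval2 bern length]; field.
Qed.

Ltac all_pos := cbn [all_nonempty]; repeat split; lra.

Lemma rileyEv_vlo_gt0 E : 0 <= E <= Emax -> 0 < rileyEv E vlo.
Proof.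
  intros HE; replace E with (Emax * (E / Emax)) by (unfold Emax; field).
  rewrite rileyEv_vlo_bern; apply bern1_pos;
    [unfold cert_vlo; all_pos | unfold Emax in *; split; lra].
Qed.

Lemma rileyEv_vhi_lt0 E : 0 <= E <= Emax -> rileyEv E vhi < 0.
Proof.
  intros HE; replace E with (Emax * (E / Emax)) by (unfold Emax; field).
  enough (0 < - rileyEv (Emax * (E / Emax)) vhi) by lra.
  rewrite rileyEv_vhi_bern; apply bern1_pos;
    [unfold cert_vhi; all_pos | unfold Emax in *; split; lra].
Qed.

Lemma rileyEv_dq_lt0 E v1 v2 :
  0 <= E <= Emax -> vlo <= v1 <= vhi -> vlo <= v2 <= vhi -> rileyEv_dq E v1 v2 < 0.
Proof.
  intros HE H1 H2.
  replace E with (Emax * (E / Emax)) by (unfold Emax; field).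
  replace v1 with (vlo + 7/5 * ((v1 - vlo) * 5/7)) by field.
  replace v2 with (vlo + 7/5 * ((v2 - vlo) * 5/7)) by field.
  match goal with |- ?d < 0 => enough (0 < - d) by lra end.
  rewrite rileyEv_dq_bern; unfold Emax, vlo, vhi in *.
  apply bern3_pos; [unfold cert_dq; all_pos | split; lra ..].
Qed.

Lemma rileyEv_decreasing E v1 v2 :
  0 <= E <= Emax -> vlo <= v1 -> v1 < v2 -> v2 <= vhi -> rileyEv E v2 < rileyEv E v1.
Proof.
  intros HE H1 H12 H2.
  assert (Hdq : rileyEv_dq E v1 v2 < 0) by (apply rileyEv_dq_lt0; lra).
  assert (Hsub := rileyEv_sub E v1 v2).
  assert (0 < (v1 - v2) * rileyEv_dq E v1 v2) by nra.
  lra.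
Qed.

Lemma rileyEv_Emax_0_gt0 : 0 < rileyEv Emax 0.
Proof.
  replace (rileyEv Emax 0) with (6813961523419 / 806460091894081); [lra |].
  unfold rileyEv, riley_coefs, Emax; cbn [peval peval2]; field.
Qed.

Lemma longEv_Emax_lt v : 0 <= v <= vhi -> longEv Emax v < Emax ^ 2.
Proof.
  intros Hv; replace v with (1/5 * (v * 5)) by field.
  enough (0 < Emax ^ 2 - longEv Emax (1/5 * (v * 5))) by lra.
  rewrite longEv_Emax_bern; apply bern1_pos;
    [unfold cert_long_Emax; all_pos | unfold vhi in *; lra].
Qed.

Lemma longEv_gt_half E v : 0 <= E <= 1/4 -> vlo <= v <= vhi -> 1/2 < longEv E v.
Proof.
  intros HE Hv.
  replace E with (1/4 * (E * 4)) by field.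
  replace v with (vlo + 7/5 * ((v - vlo) * 5/7)) by field.
  enough (0 < longEv (1/4 * (E * 4)) (vlo + 7/5 * ((v - vlo) * 5/7)) - 1/2) by lra.
  rewrite longEv_half_bern; unfold vlo, vhi in *.
  apply bern2_pos; [unfold cert_long_half; all_pos | lra | lra].
Qed.

Lemma continuity_ptP f x :
  continuity_pt f x <-> forall eps, 0 < eps ->
    exists del, 0 < del /\ forall y, Rabs (y - x) < del -> Rabs (f y - f x) < eps.
Proof.
  split; intros H eps Heps; destruct (H eps Heps) as [del [Hdel Hy]];
    exists del; split; auto.
  - intros y Hyx; destruct (Req_dec x y) as [<- | Hne].
    + unfold Rminus; rewrite Rplus_opp_r Rabs_R0; exact Heps.
    + apply Hy; repeat split; auto.
  - intros y [_ Hyx]; apply Hy, Hyx.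
Qed.

Lemma continuity_pt_cst (c x : R) : continuity_pt (fun _ => c) x.
Proof. apply continuity_pt_const; intros ? ?; reflexivity. Qed.

Lemma continuity_pt_id x : continuity_pt (fun z => z) x.
Proof. apply derivable_continuous_pt, derivable_pt_id. Qed.

Lemma lipschitz1_continuity f x :
  (forall a b, Rabs (f a - f b) <= Rabs (a - b)) -> continuity_pt f x.
Proof.
  intros Hf; apply continuity_ptP; intros eps Heps; exists eps; split; [exact Heps |].
  intros y Hy; eapply Rle_lt_trans; [apply Hf | exact Hy].
Qed.

Lemma peval_continuity cs f x :
  continuity_pt f x -> continuity_pt (fun z => peval cs (f z)) x.
Proof.
  intros Hf; induction cs as [|c cs IH]; simpl; [apply continuity_pt_cst |].
  apply (continuity_pt_plus (fun _ => c)); [apply continuity_pt_cst |].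
  apply (continuity_pt_mult f); assumption.
Qed.

Lemma peval2_continuity css f g x :
  continuity_pt f x -> continuity_pt g x -> continuity_pt (fun z => peval2 css (f z) (g z)) x.
Proof.
  intros Hf Hg; induction css as [|cs css IH]; simpl; [apply continuity_pt_cst |].
  apply (continuity_pt_plus (fun z => peval cs (g z))); [apply peval_continuity, Hg |].
  apply (continuity_pt_mult f); assumption.
Qed.

Definition clamp (lo hi x : R) : R := Rmax lo (Rmin x hi).

Lemma clamp_bounds lo hi x : lo <= hi -> lo <= clamp lo hi x <= hi.
Proof. unfold clamp, Rmax, Rmin; repeat destruct Rle_dec; lra. Qed.

Lemma clamp_id lo hi x : lo <= x <= hi -> clamp lo hi x = x.
Proof. unfold clamp, Rmax, Rmin; repeat destruct Rle_dec; lra. Qed.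

Lemma clamp_continuity lo hi x : lo <= hi -> continuity_pt (clamp lo hi) x.
Proof.
  intros Hlh; apply lipschitz1_continuity; intros a b.
  unfold clamp, Rmax, Rmin, Rabs; repeat destruct Rle_dec; repeat destruct Rcase_abs; lra.
Qed.

Section RootContinuity.

Variables (f : R -> R -> R) (root : R -> R) (a b : R).
Hypothesis f_decreasing : forall x w1 w2, a <= w1 -> w1 < w2 -> w2 <= b -> f x w2 < f x w1.
Hypothesis root_spec : forall x, a <= root x <= b /\ f x (root x) = 0.

Lemma root_between x lo hi :
  a <= lo <= b -> a <= hi <= b -> 0 < f x lo -> f x hi < 0 -> lo < root x < hi.
Proof.
  intros Hlo Hhi Hflo Hfhi; destruct (root_spec x) as [Hr Hr0]; split.
  - destruct (Rlt_le_dec lo (root x)) as [H | H]; [exact H |].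
    destruct (Rle_lt_or_eq_dec _ _ H) as [H' | H'].
    + assert (f x lo < f x (root x)) by (apply f_decreasing; lra); lra.
    + rewrite H' in Hr0; lra.
  - destruct (Rlt_le_dec (root x) hi) as [H | H]; [exact H |].
    destruct (Rle_lt_or_eq_dec _ _ H) as [H' | H'].
    + assert (f x (root x) < f x hi) by (apply f_decreasing; lra); lra.
    + rewrite <- H' in Hr0; lra.
Qed.

Hypothesis f_continuity : forall w x, continuity_pt (fun x => f x w) x.
Hypothesis f_a_gt0 : forall x, 0 < f x a.
Hypothesis f_b_lt0 : forall x, f x b < 0.

Lemma root_continuity x : continuity_pt root x.
Proof.
  apply continuity_ptP; intros eps Heps.
  assert (Hab : a <= b) by (destruct (root_spec x); lra).
  assert (Hx : a < root x < b) by (apply root_between; auto; lra).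
  set (lo := Rmax a (root x - eps / 2)); set (hi := Rmin b (root x + eps / 2)).
  assert (Hlo : a <= lo < root x /\ root x - eps / 2 <= lo).
  { split; [split; [apply Rmax_l | apply Rmax_lub_lt; lra] | apply Rmax_r]. }
  assert (Hhi : root x < hi <= b /\ hi <= root x + eps / 2).
  { split; [split; [apply Rmin_glb_lt; lra | apply Rmin_l] | apply Rmin_r]. }
  assert (Hflo : 0 < f x lo).
  { rewrite <- (proj2 (root_spec x)); apply f_decreasing; lra. }
  assert (Hfhi : f x hi < 0).
  { rewrite <- (proj2 (root_spec x)); apply f_decreasing; lra. }
  destruct (proj1 (continuity_ptP _ _) (f_continuity lo x) _ Hflo) as [d1 [Hd1 H1]].
  destruct (proj1 (continuity_ptP _ _) (f_continuity hi x) (- f x hi)) as [d2 [Hd2 H2]];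
    [lra |].
  exists (Rmin d1 d2); split; [apply Rmin_pos; assumption |]; intros y Hy.
  assert (Hy1 : 0 < f y lo).
  { assert (H := H1 y (Rlt_le_trans _ _ _ Hy (Rmin_l _ _))).
    unfold Rabs in H; destruct Rcase_abs in H; lra. }
  assert (Hy2 : f y hi < 0).
  { assert (H := H2 y (Rlt_le_trans _ _ _ Hy (Rmin_r _ _))).
    unfold Rabs in H; destruct Rcase_abs in H; lra. }
  assert (Hroot : lo < root y < hi) by (apply root_between; auto; lra).
  unfold Rabs; destruct Rcase_abs; lra.
Qed.

End RootContinuity.

Lemma Emax_pos : 0 < Emax.
Proof. unfold Emax; lra. Qed.

Lemma vlo_lt_vhi : vlo < vhi.
Proof. unfold vlo, vhi; lra. Qed.

Lemma rileyEv_continuity_v E : continuity (fun v => - rileyEv E v).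
Proof.
  intros v; apply continuity_pt_opp with (f := fun v => rileyEv E v).
  apply (peval2_continuity riley_coefs (fun _ => E) (fun v => v));
    [apply continuity_pt_cst | apply continuity_pt_id].
Qed.

Lemma rileyEv_clamp_vlo E : - rileyEv (clamp 0 Emax E) vlo < 0.
Proof.
  pose proof (rileyEv_vlo_gt0 _ (clamp_bounds 0 Emax E (Rlt_le _ _ Emax_pos))); lra.
Qed.

Lemma rileyEv_clamp_vhi E : 0 < - rileyEv (clamp 0 Emax E) vhi.
Proof.
  pose proof (rileyEv_vhi_lt0 _ (clamp_bounds 0 Emax E (Rlt_le _ _ Emax_pos))); lra.
Qed.

(* Clamping [E] to [[0, Emax]] makes the root a total function of [E], continuous on all of [R]. *)
Definition riley_root (E : R) : R :=
  proj1_sig (IVT _ vlo vhi (rileyEv_continuity_v (clamp 0 Emax E)) vlo_lt_vhi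
    (rileyEv_clamp_vlo E) (rileyEv_clamp_vhi E)).

Lemma riley_root_spec E :
  vlo <= riley_root E <= vhi /\ rileyEv (clamp 0 Emax E) (riley_root E) = 0.
Proof.
  unfold riley_root; destruct (IVT _ _ _ _ _ _ _) as [v [Hv Hv0]]; simpl; split; lra.
Qed.

Lemma riley_root_continuity E : continuity_pt riley_root E.
Proof.
  apply (root_continuity (fun E v => rileyEv (clamp 0 Emax E) v) riley_root vlo vhi).
  - intros x w1 w2 H1 H12 H2; apply rileyEv_decreasing; auto.
    apply clamp_bounds, Rlt_le, Emax_pos.
  - exact riley_root_spec.
  - intros w x; apply (peval2_continuity riley_coefs (clamp 0 Emax) (fun _ => w)).
    + apply clamp_continuity, Rlt_le, Emax_pos.
    + apply continuity_pt_cst.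
  - intros x; pose proof (rileyEv_clamp_vlo x); lra.
  - intros x; pose proof (rileyEv_clamp_vhi x); lra.
Qed.

Definition s0 : R := 146 / 100.

Lemma inv_s0_sqr : / s0 ^ 2 = Emax.
Proof. unfold s0, Emax; field. Qed.

Lemma inv_sqr_le_Emax s : s0 <= s -> 0 <= / s ^ 2 <= Emax.
Proof.
  intros Hs; rewrite <- inv_s0_sqr; unfold s0 in *; split.
  - left; apply Rinv_0_lt_compat, pow_lt; lra.
  - apply Rinv_le_contravar; [apply pow_lt; lra | apply pow_incr; lra].
Qed.

Lemma Rpower_continuity q x : 0 < x -> continuity_pt (fun y => Rpower y q) x.
Proof.
  intros Hx; apply derivable_continuous_pt.
  exists (q * Rpower x (q - 1)); apply derivable_pt_lim_power, Hx.
Qed.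

Definition long_gap (q s : R) : R :=
  s ^ 4 * longEv (/ s ^ 2) (riley_root (/ s ^ 2)) - Rpower s q.

Lemma long_gap_continuity q s : 0 < s -> continuity_pt (long_gap q) s.
Proof.
  intros Hs.
  assert (Hinv : continuity_pt (fun s => / s ^ 2) s).
  { apply (continuity_pt_inv (fun s => s ^ 2)); [| apply pow_nonzero; lra].
    apply derivable_continuous_pt, derivable_pt_pow. }
  apply (continuity_pt_minus (fun s => s ^ 4 * _)); [| apply Rpower_continuity, Hs].
  apply (continuity_pt_mult (fun s => s ^ 4)); [apply derivable_continuous_pt, derivable_pt_pow |].
  apply (peval2_continuity long_coefs (fun s => / s ^ 2) (fun s => riley_root (/ s ^ 2)));
    [exact Hinv |].
  apply (continuity_pt_comp (fun s => / s ^ 2) riley_root);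
    [exact Hinv | apply riley_root_continuity].
Qed.

Lemma long_gap_s0_lt0 q : 0 <= q -> long_gap q s0 < 0.
Proof.
  intros Hq; unfold long_gap; rewrite inv_s0_sqr.
  destruct (riley_root_spec Emax) as [Hv Hv0].
  rewrite (clamp_id 0 Emax Emax ltac:(pose proof Emax_pos; lra)) in Hv0.
  set (v := riley_root Emax) in *.
  pose proof rileyEv_Emax_0_gt0 as H0.
  assert (Hv_pos : 0 < v).
  { destruct (Rlt_le_dec 0 v) as [H | H]; [exact H | exfalso].
    destruct (Rle_lt_or_eq_dec v 0 H) as [H' | H'].
    - assert (rileyEv Emax 0 < rileyEv Emax v); [| lra].
      apply rileyEv_decreasing; unfold vhi; pose proof Emax_pos; lra.
    - rewrite H' in Hv0; lra. }
  assert (Hlong : s0 ^ 4 * longEv Emax v < 1).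
  { replace 1 with (s0 ^ 4 * Emax ^ 2) by (unfold s0, Emax; field).
    apply Rmult_lt_compat_l; [apply pow_lt; unfold s0; lra | apply longEv_Emax_lt; lra]. }
  assert (1 <= Rpower s0 q); [| lra].
  rewrite <- (Rpower_O s0 ltac:(unfold s0; lra)).
  destruct (Rle_lt_or_eq_dec 0 q Hq) as [Hq0 | <-]; [| lra].
  left; apply Rpower_lt; unfold s0; lra.
Qed.

Lemma long_gap_gt0 q S : 2 <= S -> 2 < Rpower S (4 - q) -> 0 < long_gap q S.
Proof.
  intros HS HSq; unfold long_gap.
  assert (HE : 0 <= / S ^ 2 <= 1/4).
  { split; [left; apply Rinv_0_lt_compat, pow_lt; lra |].
    replace (1/4) with (/ 2 ^ 2) by field.
    apply Rinv_le_contravar; [apply pow_lt; lra | apply pow_incr; lra]. }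
  assert (Hlong : 1/2 < longEv (/ S ^ 2) (riley_root (/ S ^ 2)))
    by (apply longEv_gt_half; [exact HE | apply riley_root_spec]).
  assert (HS4 : S ^ 4 = Rpower S (4 - q) * Rpower S q).
  { rewrite <- Rpower_plus; replace (4 - q + q) with (INR 4) by (simpl; ring).
    symmetry; apply Rpower_pow; lra. }
  assert (0 < S ^ 4) by (apply pow_lt; lra).
  assert (0 < Rpower S q) by apply exp_pos.
  set (L := longEv _ _) in *; set (P := Rpower S q) in *; set (Q := Rpower S (4 - q)) in *.
  nra.
Qed.

Lemma exists_large_base q : q < 4 -> exists S, 2 <= S /\ 2 < Rpower S (4 - q).
Proof.
  intros Hq; exists (exp (/ (4 - q) + 1)).
  assert (0 < / (4 - q)) by (apply Rinv_0_lt_compat; lra).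
  split.
  - pose proof (exp_ineq1 (/ (4 - q) + 1) ltac:(lra)); lra.
  - unfold Rpower; rewrite ln_exp.
    replace ((4 - q) * (/ (4 - q) + 1)) with (1 + (4 - q)) by (field; lra).
    pose proof (exp_ineq1 (1 + (4 - q)) ltac:(lra)); lra.
Qed.

Lemma riley_curve_point q : 0 <= q < 4 -> exists s v,
  1 < s /\ rileyEv (/ s ^ 2) v = 0 /\ s ^ 4 * longEv (/ s ^ 2) v = Rpower s q.
Proof.
  intros Hq; destruct (exists_large_base q (proj2 Hq)) as [S [HS HSq]].
  assert (Hs0S : s0 <= S) by (unfold s0; lra).
  set (G := fun s => long_gap q (clamp s0 S s)).
  assert (HG : continuity G).
  { intros x; apply (continuity_pt_comp (clamp s0 S) (long_gap q)).
    - apply clamp_continuity, Hs0S.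
    - apply long_gap_continuity; pose proof (clamp_bounds s0 S x Hs0S); unfold s0 in *; lra. }
  assert (HG0 : G s0 < 0).
  { unfold G; rewrite (clamp_id s0 S s0 ltac:(lra)); apply long_gap_s0_lt0, Hq. }
  assert (HGS : 0 < G S).
  { unfold G; rewrite (clamp_id s0 S S ltac:(lra)); apply long_gap_gt0; assumption. }
  destruct (IVT G s0 S HG ltac:(unfold s0; lra) HG0 HGS) as [z [_ Gz]].
  set (s := clamp s0 S z) in *.
  assert (Hs : s0 <= s <= S) by apply clamp_bounds, Hs0S.
  destruct (riley_root_spec (/ s ^ 2)) as [_ Hroot].
  rewrite (clamp_id 0 Emax (/ s ^ 2) ltac:(apply inv_sqr_le_Emax; lra)) in Hroot.
  exists s, (riley_root (/ s ^ 2)); split; [unfold s0 in Hs; lra | split; [exact Hroot |]].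
  unfold G, long_gap in Gz; fold s in Gz; lra.
Qed.

Local Close Scope R_scope.
From mathcomp Require Import ring lra.
Local Open Scope ring_scope.
(* Stdlib binds [R_scope] to [R]; from here on arguments of type [R] are ring expressions. *)
#[local] Bind Scope ring_scope with R.

Definition mx2 (a b c d : R) : 'M[R]_2 :=
  \matrix_(i < 2, j < 2)
    if i == ord0 then (if j == ord0 then a else b) else (if j == ord0 then c else d).

Ltac mx2_entries :=
  apply/matrixP; let i := fresh "i" in let j := fresh "j" in move=> i j; rewrite !mxE;
  by case: i => [[|[|]]] //= ?; case: j => [[|[|]]] //= ?.

Lemma mx2_mul (a b c d a' b' c' d' : R) :
  mx2 a b c d * mx2 a' b' c' d' =
  mx2 (a * a' + b * c') (a * b' + b * d') (c * a' + d * c') (c * b' + d * d').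
Proof.
apply/matrixP => i j; rewrite !mxE big_ord_recl big_ord1 !mxE.
by case: i => [[|[|]]] //= ?; case: j => [[|[|]]] //= ?.
Qed.

Lemma mx2_add (a b c d a' b' c' d' : R) :
  mx2 a b c d + mx2 a' b' c' d' = mx2 (a + a') (b + b') (c + c') (d + d').
Proof. mx2_entries. Qed.

Lemma mx2_scale (k a b c d : R) : k *: mx2 a b c d = mx2 (k * a) (k * b) (k * c) (k * d).
Proof. mx2_entries. Qed.

Lemma mx2_1 : mx2 1 0 0 1 = 1.
Proof. mx2_entries. Qed.

Lemma mx2_inj (a b c d a' b' c' d' : R) :
  mx2 a b c d = mx2 a' b' c' d' -> [/\ a = a', b = b', c = c' & d = d'].
Proof.
move=> eq_mx; have entry i j := congr1 (fun M : 'M[R]_2 => M i j) eq_mx.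
move: (entry ord0 ord0) (entry ord0 ord_max) (entry ord_max ord0) (entry ord_max ord_max).
by rewrite !mxE.
Qed.

Lemma mx2_det (a b c d : R) : \det (mx2 a b c d) = a * d - b * c.
Proof.
rewrite (expand_det_row _ ord0) big_ord_recl big_ord1 /cofactor !det_mx11 !mxE /= /bump /=.
by rewrite !expr0 !expr1 !mul1r; ring.
Qed.

Lemma mx2_inv (a b c d : R) : a * d - b * c = 1 -> (mx2 a b c d)^-1 = mx2 d (- b) (- c) a.
Proof.
move=> det1; have mulV : mx2 a b c d * mx2 d (- b) (- c) a = 1.
  by rewrite mx2_mul -mx2_1; congr mx2; try ring; rewrite -det1; ring.
have mulV' : mx2 d (- b) (- c) a * mx2 a b c d = 1.
  by rewrite mx2_mul -mx2_1; congr mx2; try ring; rewrite -det1; ring.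
have unit_mx : mx2 a b c d \is a GRing.unit by apply/unitrP; exists (mx2 d (- b) (- c) a).
by rewrite -[LHS]mulr1 -mulV mulKr.
Qed.

Lemma mx2_diag_exprz (a : R) (z : int) :
  a != 0 -> mx2 a 0 0 a^-1 ^ z = mx2 (a ^ z) 0 0 (a ^ z)^-1.
Proof.
move=> a_neq0; have exprn n : mx2 a 0 0 a^-1 ^+ n = mx2 (a ^+ n) 0 0 (a ^+ n)^-1.
  elim: n => [|n IH]; first by rewrite !expr0 invr1 mx2_1.
  by rewrite exprS IH mx2_mul exprS invfM; congr mx2; ring.
case: z => n; rewrite /exprz exprn // mx2_inv ?invrK ?oppr0 //.
by rewrite mulfV ?expf_neq0 // mulr0 subr0.
Qed.

Lemma det_longitude {A B : 'M[R]_2} : in_SL2 A -> in_SL2 B -> in_SL2 (longitude A B).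
Proof.
rewrite /in_SL2 /longitude /word_wstar /word_w => detA detB.
by rewrite !exprS expr0 mulr1 !(detM, detV) detA detB !(invr1, mul1r).
Qed.

Definition rho_a (s : R) : 'M[R]_2 := mx2 s 0 0 s^-1.
Definition rho_b (s u : R) : 'M[R]_2 := mx2 (s - u) (s - s^-1 - u) u (s^-1 + u).

Lemma det_rho_a (s : R) : s != 0 -> in_SL2 (rho_a s).
Proof. by move=> s_neq0; rewrite /in_SL2 mx2_det; field. Qed.

Lemma det_rho_b (s u : R) : s != 0 -> in_SL2 (rho_b s u).
Proof. by move=> s_neq0; rewrite /in_SL2 mx2_det; field. Qed.

Lemma rho_a_inv (s : R) : s != 0 -> (rho_a s)^-1 = mx2 s^-1 0 0 s.
Proof. by move=> s_neq0; rewrite mx2_inv ?oppr0 // -mx2_det; apply: det_rho_a. Qed.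

Lemma rho_b_inv (s u : R) :
  s != 0 -> (rho_b s u)^-1 = mx2 (s^-1 + u) (u - (s - s^-1)) (- u) (s - u).
Proof.
move=> s_neq0; rewrite mx2_inv; last by rewrite -mx2_det; apply: det_rho_b.
by congr mx2; ring.
Qed.

Lemma rho_a_expN4 (s : R) : s != 0 -> rho_a s ^- 4 = mx2 (s^-1 ^+ 4) 0 0 (s ^+ 4).
Proof.
move=> s_neq0; have := mx2_diag_exprz s (Posz 4) s_neq0; rewrite /exprz /rho_a => ->.
by rewrite mx2_inv ?oppr0 ?invrK ?exprVn // mulfV ?expf_neq0 // mulr0 subr0.
Qed.

Definition riley_poly (s t : R) : R :=
  - (s^-1)^+8*t + 3*(s^-1)^+6*t + 4*(s^-1)^+6*t^+2 - (s^-1)^+4 - 6*(s^-1)^+4*t - 9*(s^-1)^+4*t^+2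
  - 6*(s^-1)^+4*t^+3 + 3*(s^-1)^+2 + 11*(s^-1)^+2*t + 16*(s^-1)^+2*t^+2 + 9*(s^-1)^+2*t^+3
  + 4*(s^-1)^+2*t^+4 - 3 - 13*t - 19*t^+2 - 14*t^+3 - 3*t^+4 - t^+5 + 3*s^+2 + 11*s^+2*t
  + 16*s^+2*t^+2 + 9*s^+2*t^+3 + 4*s^+2*t^+4 - s^+4 - 6*s^+4*t - 9*s^+4*t^+2 - 6*s^+4*t^+3
  + 3*s^+6*t + 4*s^+6*t^+2 - s^+8*t.

Definition long_poly (s t : R) : R :=
  (s^-1)^+10*t - 2*(s^-1)^+8*t - 2*(s^-1)^+8*t^+2 + (s^-1)^+6 + 3*(s^-1)^+6*t + 2*(s^-1)^+6*t^+2
  + (s^-1)^+6*t^+3 - 2*(s^-1)^+4 - 2*(s^-1)^+4*t - (s^-1)^+4*t^+2 - (s^-1)^+2*t - 2*(s^-1)^+2*t^+2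
  - (s^-1)^+2*t^+3 + 1 + 4*t + 3*t^+2 - 2*s^+2 - 3*s^+2*t + s^+4.

Definition word_w_mx (s u : R) : 'M[R]_2 :=
  mx2
    (- (s^-1)^+6*u^+2 - 3*(s^-1)^+5*u^+3 + 4*(s^-1)^+4*u^+2 - 3*(s^-1)^+4*u^+4 - (s^-1)^+3*u
     + 12*(s^-1)^+3*u^+3 - (s^-1)^+3*u^+5 - 11*(s^-1)^+2*u^+2 + 12*(s^-1)^+2*u^+4 + 3*(s^-1)*u
     - 26*(s^-1)*u^+3 + 4*(s^-1)*u^+5 + 20*u^+2 - 22*u^+4 - 6*s*u + 37*s*u^+3 - 6*s*u^+5 + s^+2
     - 25*s^+2*u^+2 + 24*s^+2*u^+4 + 6*s^+3*u - 35*s^+3*u^+3 + 4*s^+3*u^+5 + 22*s^+4*u^+2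
     - 15*s^+4*u^+4 - 5*s^+5*u + 21*s^+5*u^+3 - s^+5*u^+5 - 13*s^+6*u^+2 + 4*s^+6*u^+4 + 3*s^+7*u
     - 6*s^+7*u^+3 + 4*s^+8*u^+2 - s^+9*u)
    (- (s^-1)^+7*u - 4*(s^-1)^+6*u^+2 + 4*(s^-1)^+5*u - 6*(s^-1)^+5*u^+3 - (s^-1)^+4
     + 16*(s^-1)^+4*u^+2 - 4*(s^-1)^+4*u^+4 - 11*(s^-1)^+3*u + 24*(s^-1)^+3*u^+3 - (s^-1)^+3*u^+5
     + 2*(s^-1)^+2 - 35*(s^-1)^+2*u^+2 + 16*(s^-1)^+2*u^+4 + 18*(s^-1)*u - 47*(s^-1)*u^+3
     + 4*(s^-1)*u^+5 - 3 + 50*u^+2 - 28*u^+4 - 21*s*u + 58*s*u^+3 - 6*s*u^+5 + 3*s^+2 - 49*s^+2*u^+2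
     + 28*s^+2*u^+4 + 16*s^+3*u - 47*s^+3*u^+3 + 4*s^+3*u^+5 - s^+4 + 34*s^+4*u^+2 - 16*s^+4*u^+4
     - 9*s^+5*u + 24*s^+5*u^+3 - s^+5*u^+5 - 16*s^+6*u^+2 + 4*s^+6*u^+4 + 4*s^+7*u - 6*s^+7*u^+3
     + 4*s^+8*u^+2 - s^+9*u)
    ((s^-1)^+8*u^+2 + 3*(s^-1)^+7*u^+3 - 3*(s^-1)^+6*u^+2 + 3*(s^-1)^+6*u^+4 - 10*(s^-1)^+5*u^+3
     + (s^-1)^+5*u^+5 + 6*(s^-1)^+4*u^+2 - 11*(s^-1)^+4*u^+4 - (s^-1)^+3*u + 18*(s^-1)^+3*u^+3
     - 4*(s^-1)^+3*u^+5 - 9*(s^-1)^+2*u^+2 + 18*(s^-1)^+2*u^+4 + 2*(s^-1)*u - 22*(s^-1)*u^+3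
     + 6*(s^-1)*u^+5 + 10*u^+2 - 18*u^+4 - s*u + 18*s*u^+3 - 4*s*u^+5 - 7*s^+2*u^+2 + 11*s^+2*u^+4
     + s^+3*u - 10*s^+3*u^+3 + s^+3*u^+5 + 3*s^+4*u^+2 - 3*s^+4*u^+4 + 3*s^+5*u^+3 - s^+6*u^+2)
    ((s^-1)^+9*u + 4*(s^-1)^+8*u^+2 - 3*(s^-1)^+7*u + 6*(s^-1)^+7*u^+3 - 13*(s^-1)^+6*u^+2
     + 4*(s^-1)^+6*u^+4 + 5*(s^-1)^+5*u - 21*(s^-1)^+5*u^+3 + (s^-1)^+5*u^+5 + 22*(s^-1)^+4*u^+2
     - 15*(s^-1)^+4*u^+4 - 6*(s^-1)^+3*u + 35*(s^-1)^+3*u^+3 - 4*(s^-1)^+3*u^+5 + (s^-1)^+2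
     - 25*(s^-1)^+2*u^+2 + 24*(s^-1)^+2*u^+4 + 6*(s^-1)*u - 37*(s^-1)*u^+3 + 6*(s^-1)*u^+5 + 20*u^+2
     - 22*u^+4 - 3*s*u + 26*s*u^+3 - 4*s*u^+5 - 11*s^+2*u^+2 + 12*s^+2*u^+4 + s^+3*u - 12*s^+3*u^+3
     + s^+3*u^+5 + 4*s^+4*u^+2 - 3*s^+4*u^+4 + 3*s^+5*u^+3 - s^+6*u^+2).

Definition word_wstar_mx (s u : R) : 'M[R]_2 :=
  mx2
    (- (s^-1)^+6*u^+2 - 3*(s^-1)^+5*u^+3 + 4*(s^-1)^+4*u^+2 - 3*(s^-1)^+4*u^+4 - (s^-1)^+3*u
     + 12*(s^-1)^+3*u^+3 - (s^-1)^+3*u^+5 - 11*(s^-1)^+2*u^+2 + 12*(s^-1)^+2*u^+4 + 3*(s^-1)*u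
     - 26*(s^-1)*u^+3 + 4*(s^-1)*u^+5 + 20*u^+2 - 22*u^+4 - 6*s*u + 37*s*u^+3 - 6*s*u^+5 + s^+2
     - 25*s^+2*u^+2 + 24*s^+2*u^+4 + 6*s^+3*u - 35*s^+3*u^+3 + 4*s^+3*u^+5 + 22*s^+4*u^+2
     - 15*s^+4*u^+4 - 5*s^+5*u + 21*s^+5*u^+3 - s^+5*u^+5 - 13*s^+6*u^+2 + 4*s^+6*u^+4 + 3*s^+7*u
     - 6*s^+7*u^+3 + 4*s^+8*u^+2 - s^+9*u)
    (- (s^-1)^+9*u - 4*(s^-1)^+8*u^+2 + 4*(s^-1)^+7*u - 6*(s^-1)^+7*u^+3 + 16*(s^-1)^+6*u^+2
     - 4*(s^-1)^+6*u^+4 - 9*(s^-1)^+5*u + 24*(s^-1)^+5*u^+3 - (s^-1)^+5*u^+5 + (s^-1)^+4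
     - 34*(s^-1)^+4*u^+2 + 16*(s^-1)^+4*u^+4 + 16*(s^-1)^+3*u - 47*(s^-1)^+3*u^+3 + 4*(s^-1)^+3*u^+5
     - 3*(s^-1)^+2 + 49*(s^-1)^+2*u^+2 - 28*(s^-1)^+2*u^+4 - 21*(s^-1)*u + 58*(s^-1)*u^+3
     - 6*(s^-1)*u^+5 + 3 - 50*u^+2 + 28*u^+4 + 18*s*u - 47*s*u^+3 + 4*s*u^+5 - 2*s^+2 + 35*s^+2*u^+2
     - 16*s^+2*u^+4 - 11*s^+3*u + 24*s^+3*u^+3 - s^+3*u^+5 + s^+4 - 16*s^+4*u^+2 + 4*s^+4*u^+4
     + 4*s^+5*u - 6*s^+5*u^+3 + 4*s^+6*u^+2 - s^+7*u)
    ((s^-1)^+6*u^+2 + 3*(s^-1)^+5*u^+3 - 3*(s^-1)^+4*u^+2 + 3*(s^-1)^+4*u^+4 + (s^-1)^+3*u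
     - 10*(s^-1)^+3*u^+3 + (s^-1)^+3*u^+5 + 7*(s^-1)^+2*u^+2 - 11*(s^-1)^+2*u^+4 - (s^-1)*u
     + 18*(s^-1)*u^+3 - 4*(s^-1)*u^+5 - 10*u^+2 + 18*u^+4 + 2*s*u - 22*s*u^+3 + 6*s*u^+5
     + 9*s^+2*u^+2 - 18*s^+2*u^+4 - s^+3*u + 18*s^+3*u^+3 - 4*s^+3*u^+5 - 6*s^+4*u^+2 + 11*s^+4*u^+4
     - 10*s^+5*u^+3 + s^+5*u^+5 + 3*s^+6*u^+2 - 3*s^+6*u^+4 + 3*s^+7*u^+3 - s^+8*u^+2)
    ((s^-1)^+9*u + 4*(s^-1)^+8*u^+2 - 3*(s^-1)^+7*u + 6*(s^-1)^+7*u^+3 - 13*(s^-1)^+6*u^+2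
     + 4*(s^-1)^+6*u^+4 + 5*(s^-1)^+5*u - 21*(s^-1)^+5*u^+3 + (s^-1)^+5*u^+5 + 22*(s^-1)^+4*u^+2
     - 15*(s^-1)^+4*u^+4 - 6*(s^-1)^+3*u + 35*(s^-1)^+3*u^+3 - 4*(s^-1)^+3*u^+5 + (s^-1)^+2
     - 25*(s^-1)^+2*u^+2 + 24*(s^-1)^+2*u^+4 + 6*(s^-1)*u - 37*(s^-1)*u^+3 + 6*(s^-1)*u^+5 + 20*u^+2
     - 22*u^+4 - 3*s*u + 26*s*u^+3 - 4*s*u^+5 - 11*s^+2*u^+2 + 12*s^+2*u^+4 + s^+3*u - 12*s^+3*u^+3
     + s^+3*u^+5 + 4*s^+4*u^+2 - 3*s^+4*u^+4 + 3*s^+5*u^+3 - s^+6*u^+2).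

(* The entries of the longitude other than (1, 1), minus their values on the Riley curve, as
   multiples of the Riley polynomial (lemma [longitudeE]). *)
Definition long_cof00 (s t : R) : R :=
  - (s^-1)^+20*t^+2 + 11*(s^-1)^+18*t^+2 + 3*(s^-1)^+18*t^+3 - (s^-1)^+16*t - 58*(s^-1)^+16*t^+2
  - 30*(s^-1)^+16*t^+3 - 3*(s^-1)^+16*t^+4 + 11*(s^-1)^+14*t + 196*(s^-1)^+14*t^+2
  + 140*(s^-1)^+14*t^+3 + 27*(s^-1)^+14*t^+4 + (s^-1)^+14*t^+5 + (s^-1)^+12 - 55*(s^-1)^+12*t
  - 476*(s^-1)^+12*t^+2 - 403*(s^-1)^+12*t^+3 - 109*(s^-1)^+12*t^+4 - 8*(s^-1)^+12*t^+5
  - 9*(s^-1)^+10 + 166*(s^-1)^+10*t + 872*(s^-1)^+10*t^+2 + 789*(s^-1)^+10*t^+3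
  + 257*(s^-1)^+10*t^+4 + 27*(s^-1)^+10*t^+5 + 35*(s^-1)^+8 - 337*(s^-1)^+8*t - 1207*(s^-1)^+8*t^+2
  - 1071*(s^-1)^+8*t^+3 - 378*(s^-1)^+8*t^+4 - 48*(s^-1)^+8*t^+5 - 75*(s^-1)^+6 + 478*(s^-1)^+6*t
  + 1187*(s^-1)^+6*t^+2 + 930*(s^-1)^+6*t^+3 + 318*(s^-1)^+6*t^+4 + 42*(s^-1)^+6*t^+5 + 90*(s^-1)^+4
  - 455*(s^-1)^+4*t - 621*(s^-1)^+4*t^+2 - 270*(s^-1)^+4*t^+3 - 42*(s^-1)^+4*t^+4 - 42*(s^-1)^+2
  + 207*(s^-1)^+2*t - 317*(s^-1)^+2*t^+2 - 579*(s^-1)^+2*t^+3 - 270*(s^-1)^+2*t^+4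
  - 42*(s^-1)^+2*t^+5 - 42 + 165*t + 1120*t^+2 + 1092*t^+3 + 393*t^+4 + 48*t^+5 + 90*s^+2
  - 449*s^+2*t - 1358*s^+2*t^+2 - 1032*s^+2*t^+3 - 297*s^+2*t^+4 - 27*s^+2*t^+5 - 75*s^+4
  + 499*s^+4*t + 1046*s^+4*t^+2 + 625*s^+4*t^+3 + 135*s^+4*t^+4 + 8*s^+4*t^+5 + 35*s^+6 - 356*s^+6*t
  - 550*s^+6*t^+2 - 245*s^+6*t^+3 - 35*s^+6*t^+4 - s^+6*t^+5 - 9*s^+8 + 173*s^+8*t + 193*s^+8*t^+2
  + 57*s^+8*t^+3 + 4*s^+8*t^+4 + s^+10 - 56*s^+10*t - 41*s^+10*t^+2 - 6*s^+10*t^+3 + 11*s^+12*t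
  + 4*s^+12*t^+2 - s^+14*t.

Definition long_cof01 (s t : R) : R :=
  (s^-1)^+14*t - 12*(s^-1)^+12*t - 4*(s^-1)^+12*t^+2 + 68*(s^-1)^+10*t + 44*(s^-1)^+10*t^+2
  + 6*(s^-1)^+10*t^+3 - (s^-1)^+8 - 242*(s^-1)^+8*t - 226*(s^-1)^+8*t^+2 - 60*(s^-1)^+8*t^+3
  - 4*(s^-1)^+8*t^+4 + 10*(s^-1)^+6 + 606*(s^-1)^+6*t + 718*(s^-1)^+6*t^+2 + 275*(s^-1)^+6*t^+3
  + 36*(s^-1)^+6*t^+4 + (s^-1)^+6*t^+5 - 44*(s^-1)^+4 - 1128*(s^-1)^+4*t - 1568*(s^-1)^+4*t^+2
  - 760*(s^-1)^+4*t^+3 - 144*(s^-1)^+4*t^+4 - 8*(s^-1)^+4*t^+5 + 110*(s^-1)^+2 + 1588*(s^-1)^+2*t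
  + 2450*(s^-1)^+2*t^+2 + 1389*(s^-1)^+2*t^+3 + 332*(s^-1)^+2*t^+4 + 27*(s^-1)^+2*t^+5 - 165
  - 1642*t - 2698*t^+2 - 1692*t^+3 - 468*t^+4 - 48*t^+5 + 132*s^+2 + 1065*s^+2*t + 1808*s^+2*t^+2
  + 1200*s^+2*t^+3 + 360*s^+2*t^+4 + 42*s^+2*t^+5 - 132*s^+6 - 1065*s^+6*t - 1808*s^+6*t^+2
  - 1200*s^+6*t^+3 - 360*s^+6*t^+4 - 42*s^+6*t^+5 + 165*s^+8 + 1642*s^+8*t + 2698*s^+8*t^+2
  + 1692*s^+8*t^+3 + 468*s^+8*t^+4 + 48*s^+8*t^+5 - 110*s^+10 - 1588*s^+10*t - 2450*s^+10*t^+2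
  - 1389*s^+10*t^+3 - 332*s^+10*t^+4 - 27*s^+10*t^+5 + 44*s^+12 + 1128*s^+12*t + 1568*s^+12*t^+2
  + 760*s^+12*t^+3 + 144*s^+12*t^+4 + 8*s^+12*t^+5 - 10*s^+14 - 606*s^+14*t - 718*s^+14*t^+2
  - 275*s^+14*t^+3 - 36*s^+14*t^+4 - s^+14*t^+5 + s^+16 + 242*s^+16*t + 226*s^+16*t^+2
  + 60*s^+16*t^+3 + 4*s^+16*t^+4 - 68*s^+18*t - 44*s^+18*t^+2 - 6*s^+18*t^+3 + 12*s^+20*t
  + 4*s^+20*t^+2 - s^+22*t.

Definition long_cof10 (s t : R) : R :=
  (s^-1)^+20*t^+2 - 10*(s^-1)^+18*t^+2 - 3*(s^-1)^+18*t^+3 + 47*(s^-1)^+16*t^+2 + 28*(s^-1)^+16*t^+3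
  + 3*(s^-1)^+16*t^+4 - (s^-1)^+14*t - 138*(s^-1)^+14*t^+2 - 120*(s^-1)^+14*t^+3
  - 26*(s^-1)^+14*t^+4 - (s^-1)^+14*t^+5 + 8*(s^-1)^+12*t + 282*(s^-1)^+12*t^+2
  + 312*(s^-1)^+12*t^+3 + 100*(s^-1)^+12*t^+4 + 8*(s^-1)^+12*t^+5 - 27*(s^-1)^+10*t
  - 418*(s^-1)^+10*t^+2 - 542*(s^-1)^+10*t^+3 - 222*(s^-1)^+10*t^+4 - 27*(s^-1)^+10*t^+5
  + 48*(s^-1)^+8*t + 443*(s^-1)^+8*t^+2 + 636*(s^-1)^+8*t^+3 + 303*(s^-1)^+8*t^+4
  + 48*(s^-1)^+8*t^+5 - 42*(s^-1)^+6*t - 290*(s^-1)^+6*t^+2 - 441*(s^-1)^+6*t^+3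
  - 228*(s^-1)^+6*t^+4 - 42*(s^-1)^+6*t^+5 + 42*(s^-1)^+2*t + 290*(s^-1)^+2*t^+2
  + 441*(s^-1)^+2*t^+3 + 228*(s^-1)^+2*t^+4 + 42*(s^-1)^+2*t^+5 - 48*t - 443*t^+2 - 636*t^+3
  - 303*t^+4 - 48*t^+5 + 27*s^+2*t + 418*s^+2*t^+2 + 542*s^+2*t^+3 + 222*s^+2*t^+4 + 27*s^+2*t^+5
  - 8*s^+4*t - 282*s^+4*t^+2 - 312*s^+4*t^+3 - 100*s^+4*t^+4 - 8*s^+4*t^+5 + s^+6*t + 138*s^+6*t^+2
  + 120*s^+6*t^+3 + 26*s^+6*t^+4 + s^+6*t^+5 - 47*s^+8*t^+2 - 28*s^+8*t^+3 - 3*s^+8*t^+4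
  + 10*s^+10*t^+2 + 3*s^+10*t^+3 - s^+12*t^+2.

Lemma word_wE (s u : R) : s != 0 -> word_w (rho_a s) (rho_b s u) = word_w_mx s u.
Proof.
move=> s_neq0; rewrite /word_w rho_a_inv // rho_b_inv // /rho_a /rho_b !mx2_mul.
by congr mx2; field.
Qed.

Lemma word_wstarE (s u : R) : s != 0 -> word_wstar (rho_a s) (rho_b s u) = word_wstar_mx s u.
Proof.
move=> s_neq0; rewrite /word_wstar rho_a_inv // rho_b_inv // /rho_a /rho_b !mx2_mul.
by congr mx2; field.
Qed.

Lemma riley_defect (s u : R) : s != 0 ->
  word_w (rho_a s) (rho_b s u) * rho_a s =
  rho_b s u * word_w (rho_a s) (rho_b s u)
  + riley_poly s (u * (s - s^-1)) *: mx2 u (u - (s - s^-1)) (- u) (- u).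
Proof.
move=> s_neq0; rewrite word_wE // /word_w_mx /rho_a /rho_b !mx2_mul mx2_scale mx2_add.
by congr mx2; rewrite /riley_poly; field.
Qed.

Lemma riley_relation (s u : R) : s != 0 -> riley_poly s (u * (s - s^-1)) = 0 ->
  word_w (rho_a s) (rho_b s u) * rho_a s = rho_b s u * word_w (rho_a s) (rho_b s u).
Proof. by move=> s_neq0 riley0; rewrite riley_defect // riley0 scale0r addr0. Qed.

Lemma longitudeE (s u : R) (t := u * (s - s^-1)) : s != 0 -> s * s - 1 != 0 ->
  exists x, longitude (rho_a s) (rho_b s u) =
    mx2 (long_poly s t + long_cof00 s t / (s - s^-1) ^+ 10 * riley_poly s t)
        (long_cof01 s t / (s - s^-1) ^+ 10 * riley_poly s t)
        (long_cof10 s t / (s - s^-1) ^+ 10 * riley_poly s t) x.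
Proof.
move=> s_neq0 ss1; rewrite /longitude word_wstarE // word_wE // rho_a_expN4 //.
rewrite /word_wstar_mx /word_w_mx !mx2_mul; eexists; congr mx2.
all: rewrite /t /long_poly /long_cof00 /long_cof01 /long_cof10 /riley_poly; field.
all: by rewrite ?s_neq0 ?ss1.
Qed.

Lemma longitude_diag (s u : R) (t := u * (s - s^-1)) :
  s != 0 -> s * s - 1 != 0 -> riley_poly s t = 0 ->
  longitude (rho_a s) (rho_b s u) = mx2 (long_poly s t) 0 0 (long_poly s t)^-1.
Proof.
move=> s_neq0 ss1 riley0; have [x Lx] := longitudeE s u s_neq0 ss1.
have := det_longitude (det_rho_a s s_neq0) (det_rho_b s u s_neq0).
rewrite Lx -/t riley0 !mulr0 !addr0 /in_SL2 mx2_det mulr0 subr0 => lx1.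
have l_neq0 : long_poly s t != 0.
  by apply/eqP => l0; move: lx1; rewrite l0 mul0r => /esym/eqP; rewrite oner_eq0.
by rewrite -(mulKf l_neq0 x) lx1 mulr1.
Qed.

Lemma IZRnegE p : IZR (Zneg p) = - (nat_of_pos p)%:R.
Proof. by rewrite IZR_NEG IZRposE INRE RoppE. Qed.

Lemma riley_polyEv (s v : R) :
  s != 0 -> riley_poly s (v * s^-1 ^+ 4) = s ^+ 4 * rileyEv (s^-1 ^+ 2) v.
Proof.
move=> s_neq0; rewrite /rileyEv /riley_coefs; cbn [peval2 peval].
rewrite ?RplusE ?RmultE ?R0E ?IZRnegE ?IZRposE ?INRE /=.
by rewrite /riley_poly; field.
Qed.

Lemma long_polyEv (s v : R) :
  s != 0 -> long_poly s (v * s^-1 ^+ 4) = s ^+ 4 * longEv (s^-1 ^+ 2) v.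
Proof.
move=> s_neq0; rewrite /longEv /long_coefs; cbn [peval2 peval].
rewrite ?RplusE ?RmultE ?R0E ?IZRnegE ?IZRposE ?INRE /=.
by rewrite /long_poly; field.
Qed.

Lemma Rpower_exprz (x : R) (z : int) : 0 < x -> x ^ z = Rpower x z%:~R.
Proof.
move=> /RltP x_gt0; case: z => n; rewrite /exprz -RpowE.
- by rewrite -(Rpower_pow n x x_gt0) INRE.
- rewrite -(Rpower_pow n.+1 x x_gt0) INRE NegzE mulrNz.
  by rewrite -RoppE Rpower_Ropp RinvE.
Qed.

Lemma Rpower_numq_denq (r : rat) (s : R) :
  0 < s -> s ^ numq r * Rpower s (- ratr r) ^ denq r = 1.
Proof.
move=> s_gt0; have l_gt0 : 0 < Rpower s (- ratr r) by apply/RltP; apply: exp_pos.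
rewrite !Rpower_exprz // Rpower_mult -RmultE -Rpower_plus.
have -> : Rplus (numq r)%:~R (Rmult (- ratr r) (denq r)%:~R) = 0.
  have den_neq0 : (denq r)%:~R != 0 :> R by rewrite intr_eq0 denq_neq0.
  by rewrite RplusE RmultE /ratr; field.
by apply: Rpower_O; apply/RltP.
Qed.

Lemma surgery_diag (r : rat) (s : R) (l := Rpower s (- ratr r)) :
  0 < s -> rho_a s ^ numq r * mx2 l 0 0 l^-1 ^ denq r = 1.
Proof.
move=> s_gt0; have l_gt0 : 0 < l by apply/RltP; apply: exp_pos.
rewrite /rho_a !mx2_diag_exprz ?lt0r_neq0 // mx2_mul -mx2_1 -invfM Rpower_numq_denq //.
by congr mx2; rewrite ?invr1; ring.
Qed.

Lemma rho_nonabelian (s u : R) : s - s^-1 != 0 -> nonabelian_rep (rho_a s) (rho_b s u).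
Proof.
move=> d_neq0; rewrite /nonabelian_rep /rho_a /rho_b !mx2_mul.
apply/eqP => /mx2_inj [_ e01 e10 _].
have : u * (s - s^-1) = (u * s + (s^-1 + u) * 0) - (0 * (s - u) + s^-1 * u) by ring.
rewrite -e10 subrr => /eqP; rewrite mulf_eq0 (negbTE d_neq0) orbF => /eqP u0.
move: e01; rewrite u0 => e01.
have : (s - s^-1) * (s - s^-1) =
       (s * (s - s^-1 - 0) + 0 * (s^-1 + 0)) - ((s - 0) * 0 + (s - s^-1 - 0) * s^-1) by ring.
by rewrite e01 subrr => /eqP; rewrite mulf_eq0 orbb (negbTE d_neq0).
Qed.

Lemma curve_point_surgery_rep (r : rat) (s v : R) :
  1 < s -> rileyEv (s^-1 ^+ 2) v = 0 ->
  s ^+ 4 * longEv (s^-1 ^+ 2) v = Rpower s (- ratr r) ->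
  exists A B, surgery_rep r A B /\ nonabelian_rep A B.
Proof.
move=> s_gt1 riley0 long_eq.
have s_gt0 : 0 < s by apply: lt_trans s_gt1.
have s_neq0 : s != 0 by rewrite gt_eqF.
have ss1 : s * s - 1 != 0 by rewrite gt_eqF // subr_gt0; nra.
have d_neq0 : s - s^-1 != 0.
  have -> : s - s^-1 = (s * s - 1) / s by field.
  by rewrite mulf_neq0 // invr_neq0.
pose u := v * s^-1 ^+ 4 / (s - s^-1).
have t_eq : u * (s - s^-1) = v * s^-1 ^+ 4 by rewrite divfK.
have riley_u : riley_poly s (u * (s - s^-1)) = 0 by rewrite t_eq riley_polyEv // riley0 mulr0.
exists (rho_a s), (rho_b s u); split; last exact: rho_nonabelian.
split; [exact: det_rho_a | exact: det_rho_b | exact: riley_relation |].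
by rewrite longitude_diag // t_eq long_polyEv // long_eq surgery_diag.
Qed.

Theorem mainTheorem11 (r : rat) :
  -4 < r <= 0 ->
  exists A B : 'M[Rdefinitions.R]_2, surgery_rep r A B /\ nonabelian_rep A B.
Proof.
move=> /andP [r_gtN4 r_le0].
have q_ge0 : 0 <= - ratr r :> R by rewrite oppr_ge0 lerq0.
have q_lt4 : - ratr r < 4 :> R.
  by rewrite ltrNl -(ratr_nat R 4) -rmorphN ltr_rat.
have q_bounds : Rle 0 (- ratr r) /\ Rlt (- ratr r) (IZR 4).
  by split; [apply/RleP | apply/RltP; rewrite IZRposE INRE].
have [s [v [/RltP s_gt1 [riley0 long_eq]]]] := riley_curve_point _ q_bounds.
have inv_sqr : Rinv (pow s 2) = s^-1 ^+ 2 by rewrite RinvE RpowE exprVn.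
apply: (curve_point_surgery_rep r s v).
- by rewrite -R1E.
- by rewrite -inv_sqr.
- by rewrite -inv_sqr -RpowE -RmultE.
Qed.
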